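(* For every $m\in\mathbb N$ there exists a ReLU neural network $\varphi_m^{\exp}\in\widetilde\Phi(m^2\log^2m,\ m\log m,\ m^3\log^3m,\ 1)$ with $|\varphi^{\exp}_m(x)-e^{-x}|\le2^{-m}$ for all $x\ge0$.
   Context: ReLU networks are maps $x\mapsto A_L\sigma_{b_L}\cdots A_1\sigma_{b_1}A_0x$ with $\sigma_b(x)=((x_j-b_j)\vee0)_j$. $\widetilde\Phi(\tilde L,\tilde W,\tilde S,\tilde B)$ is the class of such networks with depth $\lesssim\tilde L$, maximal layer width $\lesssim\tilde W$, number of nonzero weights/biases $\lesssim\tilde S$ and all parameters bounded in absolute value by a quantity $\lesssim\tilde B$, with constants independent of $m$. *)

From HB Require Import structures.
From mathcomp Require Import all_boot all_order all_algebra.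
From mathcomp Require Import reals sequences exp.
Set Implicit Arguments. Unset Strict Implicit. Unset Printing Implicit Defensive.
Import Order.TTheory GRing.Theory Num.Theory.
Local Open Scope ring_scope.

(* A ReLU network  x |-> A_L sigma_{b_L} ... A_1 sigma_{b_1} A_0 x,
   from input dimension n to output dimension k.
   - [Last A]          : the final affine-free layer A_L (L = 0 remaining),
   - [Layer A b N]     : x |-> N (sigma_b (A x)).                        *)
Inductive relu_net (R : Type) : nat -> nat -> Type :=
| Last  : forall n k, 'M[R]_(k, n) -> relu_net R n k
| Layer : forall n n' k, 'M[R]_(n', n) -> 'cV[R]_n' -> relu_net R n' k ->
          relu_net R n k.

Arguments Last {R n k}.
Arguments Layer {R n n' k}.

Definition sigma_shift (R : realType) (n : nat) (b x : 'cV[R]_n) : 'cV[R]_n :=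
  \col_j Num.max (x j ord0 - b j ord0) 0.

Fixpoint net_eval (R : realType) n k (N : relu_net R n k) : 'cV[R]_n -> 'cV[R]_k :=
  match N with
  | Last _ _ A => fun x => A *m x
  | Layer _ _ _ A b N' => fun x => net_eval N' (sigma_shift b (A *m x))
  end.

Definition realize (R : realType) (N : relu_net R 1 1) (x : R) : R :=
  net_eval N (const_mx x) ord0 ord0.

(* depth = number of linear maps A_0, ..., A_L, i.e. L + 1 *)
Fixpoint net_depth (R : Type) n k (N : relu_net R n k) : nat :=
  match N with
  | Last _ _ _ => 1
  | Layer _ _ _ _ _ N' => (net_depth N').+1
  end.

Fixpoint net_width (R : Type) n k (N : relu_net R n k) : nat :=
  match N with
  | Last n k _ => maxn n k
  | Layer n n' _ _ _ N' => maxn n (net_width N')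
  end.

Definition mx_nnz (R : realType) m n (A : 'M[R]_(m, n)) : nat :=
  (\sum_(i < m) \sum_(j < n) nat_of_bool (A i j != 0%R))%N.

Fixpoint net_size (R : realType) n k (N : relu_net R n k) : nat :=
  match N with
  | Last _ _ A => mx_nnz A
  | Layer _ _ _ A b N' => addn (addn (mx_nnz A) (mx_nnz b)) (net_size N')
  end.

Definition mx_bounded (R : realType) m n (B : R) (A : 'M[R]_(m, n)) : Prop :=
  forall i j, `|A i j| <= B.

Fixpoint net_params_bounded (R : realType) n k (B : R) (N : relu_net R n k) : Prop :=
  match N with
  | Last _ _ A => mx_bounded B A
  | Layer _ _ _ A b N' => mx_bounded B A /\ mx_bounded B b /\ net_params_bounded B N'
  end.

(* Membership in Phi~(L, W, S, B) with a given constant C (the "<~" constant). *)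
Definition in_Phi (R : realType) (C : R) (L W S B : R) (N : relu_net R 1 1) : Prop :=
  [/\ (net_depth N)%:R <= C * L,
      (net_width N)%:R <= C * W,
      (net_size N)%:R <= C * S &
      net_params_bounded (C * B) N].

(* e^-x is approximated within 16 / 2^K by u^(2^K), u = (1 - x / 2^K)_+.
   The power is computed by K successive approximate squarings, each of which
   is Yarotsky's sawtooth network: y^2 = y - sum_(1 <= s <= k) tent^s(y) / 4^s
   up to an error 4^-(k+1).  Squaring is 2-Lipschitz on [0, 1], so the K
   squaring errors add up to less than 2^K 4^-(k+1).  With k + 1 = K = m + 5
   the total error is 17 / 2^K <= 2^-m, and the network has width 3, depth
   K^2 + 2 = O(m^2), O(m^2) nonzero weights, and weights bounded by 4; the
   logarithmic factors of the statement are slack. *)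

From HB Require Import structures.
From mathcomp Require Import all_boot all_order all_algebra.
From mathcomp Require Import reals sequences exp.
From mathcomp Require Import ring lra zify.
Set Implicit Arguments. Unset Strict Implicit. Unset Printing Implicit Defensive.
Import Order.TTheory GRing.Theory Num.Theory.
Local Open Scope ring_scope.

Section Sawtooth.
Variable R : realFieldType.
Implicit Types (a p x y : R).

Definition relu x := Num.max x 0.

Lemma relu_id x : 0 <= x -> relu x = x.
Proof. by move=> x0; rewrite /relu max_l. Qed.

Lemma relu_eq0 x : x <= 0 -> relu x = 0.
Proof. by move=> x0; rewrite /relu max_r. Qed.

Lemma relu_ge0 x : 0 <= relu x.
Proof. by rewrite /relu le_max lexx orbT. Qed.

Lemma relu_le x y : 0 <= y -> x <= y -> relu x <= y.
Proof. by move=> y0 xy; rewrite /relu ge_max xy. Qed.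

Lemma relu_reluB a x : 0 <= a -> relu (relu x - a) = relu (x - a).
Proof.
move=> a0; have [x0|x0] := leP x 0.
  by rewrite (relu_eq0 x0) !relu_eq0 //; lra.
by rewrite (relu_id (ltW x0)).
Qed.

(* On [0, 1] this is the tent map [p |-> 2 min(p, 1 - p)]. *)
Definition tent p := 2 * p - 4 * relu (p - 1/2).

Definition bump p := p - p ^+ 2.

Lemma tent_ge0 p : 0 <= p <= 1 -> 0 <= tent p.
Proof.
move=> /andP[p0 p1]; rewrite /tent.
by have [h|h] := leP p (1/2); [rewrite relu_eq0 | rewrite relu_id]; lra.
Qed.

Lemma tent_le1 p : 0 <= p <= 1 -> tent p <= 1.
Proof.
move=> /andP[p0 p1]; rewrite /tent.
by have [h|h] := leP p (1/2); [rewrite relu_eq0 | rewrite relu_id]; lra.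
Qed.

(* Yarotsky's identity: iterating it gives
   [y^2 = y - \sum_(1 <= s <= k) tent^s y / 4^s - bump (tent^k y) / 4^k]. *)
Lemma bump_tent p : 0 <= p <= 1 -> bump p = tent p / 4 + bump (tent p) / 4.
Proof.
move=> /andP[p0 p1]; rewrite /bump /tent.
by have [h|h] := leP p (1/2); [rewrite relu_eq0 | rewrite relu_id]; try lra; ring.
Qed.

Lemma bump_ge0 p : 0 <= p <= 1 -> 0 <= bump p.
Proof.
move=> /andP[p0 p1]; rewrite /bump expr2.
have : 0 <= p * (1 - p) by apply: mulr_ge0; lra.
lra.
Qed.

Lemma bump_le p : bump p <= 1/4.
Proof.
rewrite /bump; have := sqr_ge0 (p - 1/2); rewrite !expr2; lra.
Qed.


(* [s] is the number of sawtooth steps already taken; [a] is the running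
   approximation of [y^2] and [p] the current iterate of the tent map. *)
Fixpoint sq_iter (s j : nat) a p : R * R :=
  if j is j'.+1 then
    sq_iter s.+1 j' (relu (a - tent p / 4 ^+ s.+1)) (relu (tent p))
  else (a, p).

Definition sq_approx (k : nat) y := (sq_iter 0 k y y).1.

Lemma sq_iterE y j s a p : 0 <= y <= 1 -> 0 <= p <= 1 ->
  a = y ^+ 2 + bump p / 4 ^+ s -> a <= y ->
  [/\ (sq_iter s j a p).1 = y ^+ 2 + bump (sq_iter s j a p).2 / 4 ^+ (s + j),
      0 <= (sq_iter s j a p).2 <= 1 & (sq_iter s j a p).1 <= y].
Proof.
elim: j s a p => [|j IH] s a p y01 p01 aE ay /=; first by rewrite addn0.
have t01 : 0 <= tent p <= 1 by rewrite tent_ge0 ?tent_le1.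
have s4 : 0 < 4 ^+ s.+1 :> R by rewrite exprn_gt0.
have tfrac : 0 <= tent p / 4 ^+ s.+1 by rewrite divr_ge0 ?tent_ge0 // ltW.
have next_aE : a - tent p / 4 ^+ s.+1 = y ^+ 2 + bump (tent p) / 4 ^+ s.+1.
  by rewrite aE (bump_tent p01) (exprS 4 s); field; rewrite lt0r_neq0 ?exprn_gt0.
have next_a0 : 0 <= a - tent p / 4 ^+ s.+1.
  by rewrite next_aE addr_ge0 ?sqr_ge0 // divr_ge0 ?bump_ge0 // ltW.
rewrite relu_id // relu_id ?tent_ge0 // -addSnnS.
by apply: IH => //; lra.
Qed.

Lemma sq_approx_bounds k y : 0 <= y <= 1 ->
  [/\ y ^+ 2 <= sq_approx k y, sq_approx k y <= y ^+ 2 + 4 ^- k.+1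
    & sq_approx k y <= y].
Proof.
move=> y01.
have y0E : y = y ^+ 2 + bump y / 4 ^+ 0 by rewrite /bump expr0 divr1; ring.
have [qE q01 qy] := sq_iterE k y01 y01 y0E (lexx y).
rewrite /sq_approx qE add0n.
set b := bump _; have b0 : 0 <= b by exact: bump_ge0.
have b4 : b <= 1/4 by exact: bump_le.
have k4 : 0 < 4 ^+ k :> R by rewrite exprn_gt0.
split; [| | by rewrite -qE].
- by rewrite lerDl divr_ge0 // ltW.
- rewrite lerD2l exprS invfM mulrC [X in _ <= X]mulrC ler_pM2l ?invr_gt0 //; lra.
Qed.

End Sawtooth.

Section IteratedSquaring.
Variables (R : realFieldType) (F : R -> R) (d : R).
Hypothesis F_sqr : forall y, 0 <= y <= 1 ->
  [/\ y ^+ 2 <= F y, F y <= y ^+ 2 + d & F y <= 1].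

Lemma iter_sqr_approx K u : 0 <= u <= 1 ->
  [/\ u ^+ (2 ^ K) <= iter K F u,
      iter K F u <= u ^+ (2 ^ K) + (2 ^+ K - 1) * d & iter K F u <= 1].
Proof.
move=> /andP[u0 u1]; elim: K => [|K [lo hi le1]] /=.
  by rewrite expn0 expr1 expr0 subrr mul0r addr0 lexx.
set z := iter K F u in lo hi le1 *; set e := u ^+ (2 ^ K) in lo hi *.
have e0 : 0 <= e by rewrite exprn_ge0.
have z01 : 0 <= z <= 1 by apply/andP; split; lra.
have [Flo Fhi F1] := F_sqr z01.
have sqr_lip : z ^+ 2 - e ^+ 2 <= 2 * (z - e).
  have : 0 <= (z - e) * (2 - z - e) by apply: mulr_ge0; lra.
  by rewrite !expr2; lra.
have e2z2 : e ^+ 2 <= z ^+ 2 by rewrite lerXn2r // ?nnegrE; lra.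
by rewrite expnSr exprM -/e (exprS 2 K); split; lra.
Qed.

End IteratedSquaring.

Lemma subrXX_le (R : realDomainType) (a b : R) n : 0 <= b <= a ->
  a ^+ n - b ^+ n <= n%:R * a ^+ n.-1 * (a - b).
Proof.
move=> /andP[b0 ba]; rewrite subrXX mulrC ler_wpM2r ?subr_ge0 //.
have -> : n%:R * a ^+ n.-1 = \sum_(i < n) a ^+ n.-1.
  by rewrite sumr_const card_ord mulr_natl.
apply: ler_sum => i _.
have a0 : 0 <= a := le_trans b0 ba.
have iN : (i <= n.-1)%N by have := ltn_ord i; lia.
by rewrite -{2}(subnK iN) exprD ler_wpM2l ?exprn_ge0 ?lerXn2r.
Qed.

Section ExpApprox.
Variable R : realType.
Implicit Types (t x : R).

Lemma expRN_1B_le t : 0 <= t -> expR (- t) - (1 - t) <= t ^+ 2.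
Proof.
move=> t0; have := expR_ge1Dx t; have := expRxMexpNx_1 t.
have := expR_gt0 (- t); set a := expR (- t) => a0 aE ht.
have : a * (1 + t) <= 1 by rewrite -aE [X in _ <= X]mulrC; apply: ler_wpM2l; lra.
have : 0 <= t ^+ 3 by rewrite exprn_ge0.
by rewrite !exprS expr0; nra.
Qed.

Lemma expRN_le_inv x : 0 < x -> expR (- x) <= x^-1.
Proof.
move=> x0; rewrite expRN lef_pV2 ?posrE ?expR_gt0 //.
by have := expR_ge1Dx x; lra.
Qed.

Lemma sqr_mul_expRN_half x : 0 <= x -> x ^+ 2 * expR (- x / 2) <= 16.
Proof.
move=> x0; have q := expR_ge1Dx (x / 4).
have x2 : x ^+ 2 <= 16 * expR (x / 2).
  have -> : x / 2 = x / 4 + x / 4 by field.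
  rewrite expRD; have : (1 + x / 4) * (1 + x / 4) <= expR (x / 4) * expR (x / 4).
    by apply: ler_pM; lra.
  by rewrite expr2; nra.
have := expRxMexpNx_1 (x / 2); rewrite mulNr.
have := ler_wpM2r (expR_ge0 (- (x / 2))) x2; nra.
Qed.

Lemma pow_1B_expR N x : (1 < N)%N -> 0 <= x <= N%:R ->
  0 <= expR (- x) - (1 - x / N%:R) ^+ N <= 16 / N%:R.
Proof.
(* With [t = x / N] and [a = e^-t >= 1 - t]: the error is at most
   [N a^(N-1) (a - (1 - t)) <= N e^(-x/2) t^2 = e^(-x/2) x^2 / N]. *)
move=> N1 /andP[x0 xN]; have N0 : 0 < N%:R :> R by rewrite ltr0n; lia.
set t := x / N%:R; set a := expR (- t).
have t0 : 0 <= t by rewrite divr_ge0 // ltW.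
have t1 : t <= 1 by rewrite ler_pdivrMr // mul1r.
have xE : x = t * N%:R by rewrite divfK // lt0r_neq0.
clearbody t.
have ta : 1 - t <= a by have := expR_ge1Dx (- t); rewrite /a; lra.
have aN : a ^+ N = expR (- x) by rewrite /a -expRM_natr mulNr -xE.
have aN1 : a ^+ N.-1 <= expR (- x / 2).
  have NE : N%:R = N.-1%:R + 1 :> R by rewrite natr1 prednK //; lia.
  have : 0 <= t * (N.-1%:R - 1) by rewrite mulr_ge0 // subr_ge0 ler1n; lia.
  rewrite /a -expRM_natr ler_expR xE NE; lra.
rewrite -aN subr_ge0 lerXn2r ?nnegrE ?expR_ge0 ?subr_ge0 //=.
have a0 : 0 <= a ^+ N.-1 by rewrite exprn_ge0 ?expR_ge0.
apply: le_trans (subrXX_le N (_ : 0 <= 1 - t <= a)) _; first by rewrite subr_ge0 t1.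
apply: (@le_trans _ _ (N%:R * a ^+ N.-1 * t ^+ 2)).
  by apply: ler_wpM2l; [rewrite mulr_ge0 // ltW | exact: expRN_1B_le].
have -> : N%:R * a ^+ N.-1 * t ^+ 2 = a ^+ N.-1 * x ^+ 2 / N%:R.
  by rewrite xE; field; rewrite lt0r_neq0.
rewrite ler_pM2r ?invr_gt0 // mulrC.
by apply: le_trans (sqr_mul_expRN_half x0); apply: ler_wpM2l; rewrite ?sqr_ge0.
Qed.

Lemma relu_1B_pow_expR N x : (1 < N)%N -> 0 <= x ->
  `|relu (1 - x / N%:R) ^+ N - expR (- x)| <= 16 / N%:R.
Proof.
move=> N1 x0; have N0 : 0 < N%:R :> R by rewrite ltr0n; lia.
have [xN|Nx] := leP x N%:R.
  have xr : 0 <= x <= N%:R by rewrite x0 xN.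
  have /andP[e0 e16] := pow_1B_expR N1 xr.
  rewrite relu_id; first by rewrite distrC ger0_norm.
  by rewrite subr_ge0 ler_pdivrMr // mul1r.
rewrite relu_eq0; last by rewrite subr_le0 ler_pdivlMr ?mul1r // ltW.
rewrite expr0n gtn_eqF 1?ltnW // sub0r normrN ger0_norm ?expR_ge0 //.
apply: le_trans (expRN_le_inv (lt_trans N0 Nx)) _.
have : x^-1 <= N%:R^-1 by rewrite lef_pV2 ?posrE ?ltW // (lt_trans N0 Nx).
have : 0 < N%:R^-1 :> R by rewrite invr_gt0.
lra.
Qed.

End ExpApprox.

Lemma invrX_ge0_le1 (R : realFieldType) (c : R) n :
  1 <= c -> 0 <= (c ^+ n)^-1 <= 1.
Proof.
move=> c1; have cn1 : 1 <= c ^+ n := exprn_ege1 n c1.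
by rewrite invr_ge0 invf_le1 ?(lt_le_trans ltr01) // cn1 (le_trans ler01).
Qed.

Section NetMeasures.
Variable R : realType.

Lemma net_width_ge n k (N : relu_net R n k) :
  (n <= net_width N)%N /\ (k <= net_width N)%N.
Proof. by elim: N => [n' k' A|n' n'' k' A b N' [IH1 IH2]] /=; split; lia. Qed.

Lemma mx_nnz_le m n (A : 'M[R]_(m, n)) : (mx_nnz A <= m * n)%N.
Proof.
apply: (@leq_trans (\sum_(i < m) \sum_(j < n) 1)); last first.
  by rewrite !sum_nat_const !card_ord muln1.
by apply: leq_sum => i _; apply: leq_sum => j _; case: (A i j != 0).
Qed.

Lemma net_size_le n k (N : relu_net R n k) :
  (net_size N <= (net_width N * net_width N + net_width N) * net_depth N)%N.
Proof.
elim: N => [n' k' A|n' n'' k' A b N' IH] /=; have := mx_nnz_le A; first nia.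
have := mx_nnz_le b; have [h1 _] := net_width_ge N'.
have := leq_maxl n' (net_width N'); have := leq_maxr n' (net_width N').
set w := net_width N' in IH h1 *; set W := maxn n' w; nia.
Qed.

Lemma mx_bounded_le m n (B B' : R) (A : 'M[R]_(m, n)) :
  B <= B' -> mx_bounded B A -> mx_bounded B' A.
Proof. by move=> BB' hA i j; apply: le_trans (hA i j) BB'. Qed.

Lemma net_params_bounded_le n k (B B' : R) (N : relu_net R n k) :
  B <= B' -> net_params_bounded B N -> net_params_bounded B' N.
Proof.
move=> BB'; elim: N => [n' k' A|n' n'' k' A b N' IH] /=; first exact: mx_bounded_le.
case=> [hA [hb hN]]; split; first exact: mx_bounded_le hA.
by split; [exact: mx_bounded_le hb | exact: IH].
Qed.

End NetMeasures.

Section ExpNet.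
Variable R : realType.
Implicit Types (a p x : R).

(* The three neurons carry the running approximation [a] of the square, the
   sawtooth iterate [p], and the hidden unit [(p - 1/2)_+] needed by [tent p]. *)
Definition state a p : 'cV[R]_3 :=
  \col_(i < 3) match val i with 0 => a | 1 => p | _ => relu (p - 1/2) end.

Definition half_bias : 'cV[R]_3 := \col_(i < 3) (if val i == 2 then 1/2 else 0).

(* Before the bias, the rows compute [a - tent p / 4^(s+1)], [tent p], [tent p]. *)
Definition sq_mx (s : nat) : 'M[R]_3 := \matrix_(i < 3, j < 3)
  match val i, val j with
  | 0, 0 => 1 | 0, 1 => -2 / 4 ^+ s.+1 | 0, _ => 4 / 4 ^+ s.+1
  | _, 0 => 0 | _, 1 => 2 | _, _ => -4
  end.

Definition copy_mx : 'M[R]_3 := \matrix_(i < 3, j < 3) (if val j == 0 then 1 else 0).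

Definition out_mx : 'M[R]_(1, 3) := \matrix_(i < 1, j < 3) (if val j == 0 then 1 else 0).

Definition in_mx (K : nat) : 'M[R]_(3, 1) := \matrix_(i < 3, j < 1) - 2 ^- K.

Definition in_bias : 'cV[R]_3 := \col_(i < 3) (if val i == 2 then - (1/2) else -1).

Fixpoint sq_layers (s j : nat) (N : relu_net R 3 1) : relu_net R 3 1 :=
  if j is j'.+1 then Layer (sq_mx s) half_bias (sq_layers s.+1 j' N) else N.

Fixpoint pow_body (k K : nat) : relu_net R 3 1 :=
  if K is K'.+1 then sq_layers 0 k (Layer copy_mx half_bias (pow_body k K'))
  else Last out_mx.

Definition exp_net (K : nat) : relu_net R 1 1 :=
  Layer (in_mx K) in_bias (pow_body K.-1 K).

Lemma sq_mx_state s a p :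
  sigma_shift half_bias (sq_mx s *m state a p) =
  state (relu (a - tent p / 4 ^+ s.+1)) (relu (tent p)).
Proof.
have s4 : 4 ^+ s.+1 != 0 :> R by rewrite lt0r_neq0 ?exprn_gt0.
apply/matrixP => i j; rewrite !mxE !big_ord_recr big_ord0 /= !mxE /=.
case: i => [[|[|[|i]]] Hi] //=; rewrite ?relu_reluB /tent; try lra;
  rewrite /relu; congr Num.max; by field.
Qed.

Lemma copy_mx_state a p :
  sigma_shift half_bias (copy_mx *m state a p) = state (relu a) (relu a).
Proof.
apply/matrixP => i j; rewrite !mxE !big_ord_recr big_ord0 /= !mxE /=.
case: i => [[|[|[|i]]] Hi] //=; rewrite ?relu_reluB; try lra;
  rewrite /relu; congr Num.max; ring.
Qed.

Lemma in_mx_const K x :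
  sigma_shift in_bias (in_mx K *m const_mx x) =
  state (relu (1 - x / 2 ^+ K)) (relu (1 - x / 2 ^+ K)).
Proof.
have K2 : 2 ^+ K != 0 :> R by rewrite lt0r_neq0 ?exprn_gt0.
apply/matrixP => i j; rewrite !mxE !big_ord_recr big_ord0 /= !mxE /=.
case: i => [[|[|[|i]]] Hi] //=; rewrite ?relu_reluB; try lra;
  rewrite /relu; congr Num.max; by field.
Qed.

Lemma sq_layers_eval s j N a p :
  net_eval (sq_layers s j N) (state a p) =
  net_eval N (state (sq_iter s j a p).1 (sq_iter s j a p).2).
Proof. by elim: j s a p => [|j IH] s a p //=; rewrite sq_mx_state IH. Qed.

Lemma pow_body_eval k K y :
  net_eval (pow_body k K) (state y y) ord0 ord0 =
  iter K (fun z => relu (sq_approx k z)) y.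
Proof.
elim: K y => [|K IH] y /=.
  by rewrite !mxE !big_ord_recr big_ord0 /= !mxE /=; ring.
by rewrite sq_layers_eval /= copy_mx_state IH -iterSr.
Qed.

Lemma realize_exp_net K x :
  realize (exp_net K) x =
  iter K (fun z => relu (sq_approx K.-1 z)) (relu (1 - x / 2 ^+ K)).
Proof. by rewrite /realize /= in_mx_const pow_body_eval. Qed.

Lemma exp_net_approx K x : (0 < K)%N -> 0 <= x ->
  `|realize (exp_net K) x - expR (- x)| <= 17 / 2 ^+ K.
Proof.
move=> K0 x0; rewrite realize_exp_net.
set u := relu _; set F := fun z => relu (sq_approx K.-1 z).
have u01 : 0 <= u <= 1.
  by rewrite relu_ge0 relu_le // lerBlDr lerDl divr_ge0 ?exprn_ge0.
have F_sqr y : 0 <= y <= 1 -> [/\ y ^+ 2 <= F y, F y <= y ^+ 2 + 4 ^- K & F y <= 1].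
  move=> y01; have [lo hi le_y] := sq_approx_bounds K.-1 y01.
  rewrite (prednK K0) in hi; rewrite /F relu_id ?(le_trans (sqr_ge0 y)) //.
  by split => //; apply: le_trans le_y _; case/andP: y01.
have [lo hi _] := iter_sqr_approx F_sqr K u01.
have N1 : (1 < 2 ^ K)%N by rewrite -{1}(expn0 2) ltn_exp2l.
have exp_err := relu_1B_pow_expR N1 x0; rewrite natrX -/u in exp_err.
set P := 2 ^+ K in hi exp_err *; have P0 : 0 < P by rewrite exprn_gt0.
have PV0 : 0 <= P^-1 by rewrite invr_ge0 ltW.
have sq_err : (P - 1) * 4 ^- K <= P^-1.
  have -> : 4 ^- K = P^-1 * P^-1 :> R by rewrite /P -invfM -exprMn -natrM.
  rewrite mulrA mulrBl mulfV ?lt0r_neq0 // mul1r.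
  have := mulr_ge0 PV0 PV0; lra.
apply: le_trans (ler_distD (u ^+ (2 ^ K)) _ _) _.
rewrite ger0_norm ?subr_ge0 //; lra.
Qed.

Lemma depth_sq_layers s j N :
  net_depth (sq_layers s j N) = (j + net_depth N)%N.
Proof. by elim: j s => [|j IH] s //=; rewrite IH. Qed.

Lemma depth_exp_net K : net_depth (exp_net K) = (K * K + 2)%N.
Proof.
have depth_pow_body k K' : net_depth (pow_body k K') = (K' * k.+1 + 1)%N.
  by elim: K' => [|K' IH] //=; rewrite depth_sq_layers /= IH; lia.
by rewrite /= depth_pow_body; case: K => [|K] //=; lia.
Qed.

Lemma width_exp_net K : net_width (exp_net K) = 3%N.
Proof.
have width_sq_layers s j N :
    net_width N = 3%N -> net_width (sq_layers s j N) = 3%N.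
  by move=> wN; elim: j s => [|j IH] s //=; rewrite IH.
have width_pow_body k K' : net_width (pow_body k K') = 3%N.
  by elim: K' => [|K' IH] //=; rewrite width_sq_layers //= IH.
by rewrite /= width_pow_body.
Qed.

Lemma sq_mx_bounded s : mx_bounded 4 (sq_mx s).
Proof.
have /andP[q0 q1] : 0 <= (4 ^+ s.+1 : R)^-1 <= 1 by apply: invrX_ge0_le1; lra.
move=> i j; rewrite mxE ler_norml.
by case: i j => [[|[|[|i]]] Hi] [[|[|[|j]]] Hj] //=; lra.
Qed.

Lemma exp_net_bounded K : net_params_bounded 4 (exp_net K).
Proof.
have half_bias_bounded : mx_bounded 4 half_bias.
  by move=> i j; rewrite mxE ler_norml; case: ifP => _; lra.
have sq_layers_bounded s j N :
    net_params_bounded 4 N -> net_params_bounded 4 (sq_layers s j N).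
  by move=> hN; elim: j s => [|j IH] s //=; split; [exact: sq_mx_bounded|split].
have pow_body_bounded k K' : net_params_bounded 4 (pow_body k K').
  elim: K' => [|K' IH] /=.
    by move=> i j; rewrite mxE ler_norml; case: ifP => _; lra.
  apply: sq_layers_bounded; split; last by split.
  by move=> i j; rewrite mxE ler_norml; case: ifP => _; lra.
have /andP[q0 q1] : 0 <= (2 ^+ K : R)^-1 <= 1 by apply: invrX_ge0_le1; lra.
split; first by move=> i j; rewrite mxE ler_norml; lra.
by split; first by move=> i j; rewrite mxE ler_norml; case: ifP => _; lra.
Qed.

End ExpNet.

Lemma ler_scale_pow (R : realFieldType) (c l L M : R) k :
  0 <= c -> 0 < l <= 1 -> l <= L -> 0 <= M -> (k <= 3)%N ->
  c * M <= c / l ^+ 3 * (M * L ^+ k).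
Proof.
move=> c0 /andP[l0 l1] lL M0 k3.
have lk : l ^+ 3 <= L ^+ k.
  apply: le_trans (ler_wiXn2l (ltW l0) l1 k3) _.
  by rewrite lerXn2r ?nnegrE ?(ltW l0) ?(le_trans (ltW l0) lL).
have -> : c * M = c / l ^+ 3 * (M * l ^+ 3) by field; rewrite lt0r_neq0.
by apply: ler_wpM2l; [rewrite divr_ge0 ?exprn_ge0 // ltW | apply: ler_wpM2l].
Qed.

Theorem lemmaC3 (R : realType) :
  exists C : R, 0 < C /\
  forall m : nat, (2 <= m)%N ->
  exists N : relu_net R 1 1,
    in_Phi C ((m%:R) ^+ 2 * (ln (m%:R)) ^+ 2)
             (m%:R * ln (m%:R))
             ((m%:R) ^+ 3 * (ln (m%:R)) ^+ 3)
             1 N /\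
    forall x : R, 0 <= x -> `|realize N x - expR (- x)| <= 2 ^- m.
Proof.
set l := ln (2 : R).
have l01 : 0 < l <= 1.
  have := @le_ln1Dx R 1; rewrite (_ : 1 + 1 = 2) // => l1.
  by rewrite ln_gt0 ?l1 //; lra.
exists (168 / l ^+ 3); split; first by rewrite divr_gt0 ?exprn_gt0 //; case/andP: l01.
move=> m m2; exists (exp_net R (m + 5)); split; last first.
  move=> x x0; apply: le_trans (exp_net_approx _ x0) _; first by rewrite addn_gt0 orbT.
  have -> : 17 / 2 ^+ (m + 5) = 17 / 32 * 2 ^- m :> R.
    rewrite exprD (_ : 2 ^+ 5 = 32 :> R); last by rewrite !exprS expr0; ring.
    by field; rewrite lt0r_neq0 ?exprn_gt0.
  have : 0 <= 2 ^- m :> R by rewrite invr_ge0 exprn_ge0.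
  lra.
have lm : l <= ln m%:R by rewrite ler_ln ?posrE ?ltr0n ?ler_nat; lia.
have c0 : 0 <= 168 :> R by [].
have scale j k n : (k <= 3)%N -> (n <= 168 * m ^ j)%N ->
    n%:R <= 168 / l ^+ 3 * (m%:R ^+ j * ln m%:R ^+ k) :> R.
  move=> k3 nm; apply: le_trans (ler_scale_pow c0 l01 lm (exprn_ge0 _ (ler0n _ m)) k3).
  by rewrite -natrX -natrM ler_nat.
split.
- by rewrite depth_exp_net scale //; nia.
- by rewrite -[ln _]expr1 -[m%:R]expr1 width_exp_net scale //; nia.
- apply: scale => //; have := net_size_le (exp_net R (m + 5)).
  by rewrite width_exp_net depth_exp_net; nia.
- apply: net_params_bounded_le (exp_net_bounded R (m + 5)).
  by have := scale 0%N 0%N 4%N; rewrite !expr0 mulr1 expn0; apply.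
Qed.
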